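(* Let $\mathcal{X}$ be a connected $n$-premaniplex and let $(\mathcal{Y},\eta)$ be an $(n,m)$-voltage operator that preserves connectivity. Let $\gamma\in\operatorname{Aut}(\mathcal{X}\rtimes_\eta\mathcal{Y})$ be such that for every flag $(x,y)$ of $\mathcal{X}\rtimes_\eta\mathcal{Y}$, the $\mathcal{Y}$-coordinate of $(x,y)\gamma$ is $y$. Then there is an automorphism $\alpha\in\operatorname{Aut}(\mathcal{X})$ such that $(x,y)\gamma=(x\alpha,y)$ for all $(x,y)\in\mathcal{X}\times\mathcal{Y}$; that is, $\gamma$ may be regarded as an automorphism of $\mathcal{X}$.
   Context: A graph has a set of vertices and a set of darts, each dart $d$ having a starting vertex and an inverse dart $d^{-1}$ (an involution; semi-edges $d=d^{-1}$ and parallel edges are allowed). An $n$-premaniplex is a graph whose edges are coloured with $\{0,\dots,n-1\}$ such that every vertex (called a flag) is the start of exactly one dart of each colour, and for $|i-j|\ge 2$ every alternating path of length 4 with colours $i,j$ is closed. For a flag $x$, $x^i$ denotes the end of the $i$-dart at $x$. The universal Coxeter group $\mathcal{C}^n=\langle r_0,\dots,r_{n-1}\mid r_i^2=1,\ (r_ir_j)^2=1 \text{ for } |i-j|\ge2\rangle$ acts on the left on the flags of any $n$-premaniplex by $r_ix=x^i$. A homomorphism of premaniplexes preserves $i$-adjacency for every $i$; automorphisms act on the right, so $(\omega x)\gamma=\omega(x\gamma)$ for every $\omega\in\mathcal{C}^n$. For a flag $y$ of an $m$-premaniplex $\mathcal{Y}$ and $\omega\in\mathcal{C}^m$, $W_\omega(y)$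 denotes the homotopy class of paths starting at $y$ whose colours $i_1,\dots,i_k$ (in order) satisfy $r_{i_k}\cdots r_{i_1}=\omega$ (two paths are homotopic if they have the same start and the same associated element); it ends at $\omega y$. These classes form the fundamental groupoid $\Pi(\mathcal{Y})$ under concatenation, and $\Pi^y(\mathcal{Y})$ is the group of closed ones at $y$. A voltage assignment is $\eta:\Pi(\mathcal{Y})\to\mathcal{C}^n$ with $\eta(W_1W_2)=\eta(W_2)\eta(W_1)$ whenever $W_1W_2$ is defined; $(\mathcal{Y},\eta)$ with $\mathcal{Y}$ an $m$-premaniplex is an $(n,m)$-voltage operator. For an $n$-premaniplex $\mathcal{X}$, $\mathcal{X}\rtimes_\eta\mathcal{Y}$ is the $m$-premaniplex with flag set $\mathcal{X}\times\mathcal{Y}$ and $(x,y)^i=(\eta(W_{r_i}(y))x,\ r_iy)$ for $i\in\{0,\dots,m-1\}$; thus $\omega(x,y)=(\eta(W_\omega(y))x,\omega y)$. The operator preserves connectivity if $\mathcal{X}\rtimes_\eta\mathcal{Y}$ is connected whenever $\mathcal{X}$ is connected. Standing convention: $\mathcal{Y}$ has a spanning tree all of whose darts have trivial voltage. *)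

From mathcomp Require Import all_boot.
Set Implicit Arguments. Unset Strict Implicit. Unset Printing Implicit Defensive.

Definition far (i j : nat) : bool := (i.+2 <= j) || (j.+2 <= i).

(* An n-premaniplex: flags, and for each colour i the i-dart at each flag,
   encoded by its end x^i = radj i x.  Darts are pairs (x, i); the inverse
   of (x,i) is (x^i, i); semi-edges (x^i = x) and parallel edges allowed. *)
Record premaniplex (n : nat) := Premaniplex {
  flag :> Type;
  radj : 'I_n -> flag -> flag;
  radj_inv : forall i x, radj i (radj i x) = x;
  radj_comm : forall (i j : 'I_n) x, far i j ->
      radj j (radj i (radj j (radj i x))) = x }.

(* A word i_1 ... i_k (in path order) represents r_{i_k} ... r_{i_1}. *)
Definition act (n : nat) (T : Type) (r : 'I_n -> T -> T) (w : seq 'I_n) (x : T) : T :=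
  foldl (fun z i => r i z) x w.

(* Equality in the universal Coxeter group C^n, on path-order words:
   the congruence generated by r_i^2 = 1 and (r_i r_j)^2 = 1 for |i-j|>=2. *)
Inductive coxeq (n : nat) : seq 'I_n -> seq 'I_n -> Prop :=
| coxeq_refl w : coxeq w w
| coxeq_sym w w' : coxeq w w' -> coxeq w' w
| coxeq_trans w1 w2 w3 : coxeq w1 w2 -> coxeq w2 w3 -> coxeq w1 w3
| coxeq_sq a b (i : 'I_n) : coxeq (a ++ [:: i; i] ++ b) (a ++ b)
| coxeq_comm a b (i j : 'I_n) : far i j -> coxeq (a ++ [:: i; j; i; j] ++ b) (a ++ b).

Definition connected (n : nat) (T : Type) (r : 'I_n -> T -> T) : Prop :=
  forall x y : T, exists w : seq 'I_n, act r w x = y.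

(* Automorphism (acting on the right, written as a function). *)
Definition is_aut (n : nat) (T : Type) (r : 'I_n -> T -> T) (g : T -> T) : Prop :=
  bijective g /\ forall i t, g (r i t) = r i (g t).

(* A voltage assignment eta on the fundamental groupoid Pi(Y).  The class
   W_omega(y) is encoded by the pair (y, w) with w a word representing
   omega in C^m; values in C^n are represented by words.
   eta y w is the voltage of W_[w](y). *)
Definition voltage_assignment (n m : nat) (Y : premaniplex m)
  (eta : Y -> seq 'I_m -> seq 'I_n) : Prop :=
  (forall y w w', coxeq w w' -> coxeq (eta y w) (eta y w')) /\
  (* eta(W1 W2) = eta(W2) eta(W1), i.e. in path-order words: eta W1 ++ eta W2 *)
  (forall y w1 w2,
      coxeq (eta y (w1 ++ w2)) (eta y w1 ++ eta (act (@radj _ Y) w1 y) w2)).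

Fixpoint path_in (m : nat) (Y : premaniplex m) (T : Y -> 'I_m -> Prop)
  (y : Y) (w : seq 'I_m) : Prop :=
  match w with
  | [::] => True
  | i :: w' => T y i /\ path_in T (@radj _ Y i y) w'
  end.

Definition spanning_tree (m : nat) (Y : premaniplex m) (T : Y -> 'I_m -> Prop) : Prop :=
  (forall y i, T y i -> T (@radj _ Y i y) i) /\
  (forall y y' : Y, exists w, path_in T y w /\ act (@radj _ Y) w y = y') /\
  (* acyclic: no nonempty closed path without backtracking *)
  (forall (y : Y) (w : seq 'I_m), w != [::] -> path_in T y w ->
       sorted (fun i j => i != j) w -> act (@radj _ Y) w y <> y).

(* Standing convention: a spanning tree whose darts have trivial voltage. *)
Definition trivial_spanning_tree (n m : nat) (Y : premaniplex m)
  (eta : Y -> seq 'I_m -> seq 'I_n) : Prop :=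
  exists T : Y -> 'I_m -> Prop, spanning_tree T /\
    forall y i, T y i -> coxeq (eta y [:: i]) [::].

Definition voltage_operator (n m : nat) (Y : premaniplex m)
  (eta : Y -> seq 'I_m -> seq 'I_n) : Prop :=
  voltage_assignment eta /\ trivial_spanning_tree eta.

Definition sd_adj (n m : nat) (X : premaniplex n) (Y : premaniplex m)
  (eta : Y -> seq 'I_m -> seq 'I_n) (i : 'I_m) (p : X * Y) : X * Y :=
  (act (@radj _ X) (eta p.2 [:: i]) p.1, @radj _ Y i p.2).

Definition preserves_connectivity (n m : nat) (Y : premaniplex m)
  (eta : Y -> seq 'I_m -> seq 'I_n) : Prop :=
  forall X' : premaniplex n, connected (@radj _ X') -> connected (@sd_adj n m X' Y eta).

From mathcomp Require Import all_boot.
From Stdlib Require Import Classical FunctionalExtensionality ProofIrrelevance.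
Set Implicit Arguments. Unset Strict Implicit. Unset Printing Implicit Defensive.

(* Along the darts of the spanning tree of Y the voltage is trivial, so a
   fibre-preserving automorphism gamma of X |x| Y acts on every fibre X * {y}
   by the same map alpha.  That alpha commutes with r_j because r_j, as a
   permutation of the flags of X, is the voltage of some closed walk of Y at
   a base flag: apply connectivity preservation to the monodromy premaniplex
   of X, whose flags are the permutations of X induced by words, joining the
   flags (1, y0) and (r_j, y0). *)

Lemma act_cat n T (r : 'I_n -> T -> T) a b x : act r (a ++ b) x = act r b (act r a x).
Proof. by rewrite /act foldl_cat. Qed.

Lemma act_rev n (Z : premaniplex n) w x :
  act (@radj _ Z) (rev w) (act (@radj _ Z) w x) = x.
Proof.
elim: w x => [|i w IH] x //=.
by rewrite rev_cons -cats1 act_cat IH /= radj_inv.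
Qed.

Lemma act_coxeq n (Z : premaniplex n) w w' :
  coxeq w w' -> forall z, act (@radj _ Z) w z = act (@radj _ Z) w' z.
Proof.
elim=> {w w'} [//||||].
- by move=> w w' _ IH z; rewrite IH.
- by move=> w1 w2 w3 _ H12 _ H23 z; rewrite H12 H23.
- by move=> a b i z; rewrite !act_cat /= !radj_inv.
- by move=> a b i j Hij z; rewrite !act_cat /= radj_comm.
Qed.

Lemma act_commute n T U (r : 'I_n -> T -> T) (s : 'I_n -> U -> U) (f : T -> U) :
  (forall i t, f (r i t) = s i (f t)) -> forall w t, f (act r w t) = act s w (f t).
Proof. by move=> f_comm; elim=> [|i w IH] t //=; rewrite IH f_comm. Qed.

Lemma commute_inv n T U (r : 'I_n -> T -> T) (s : 'I_n -> U -> U)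
    (f : T -> U) (g : U -> T) :
  cancel f g -> cancel g f -> (forall i t, f (r i t) = s i (f t)) ->
  forall i u, g (s i u) = r i (g u).
Proof. by move=> fK gK f_comm i u; apply: (can_inj fK); rewrite f_comm !gK. Qed.

Section Monodromy.
Variables (n : nat) (X : premaniplex n).

Definition mon_flag := {F : X -> X | exists w, F = act (@radj _ X) w}.

Lemma mon_flag_eq (F G : mon_flag) : sval F = sval G -> F = G.
Proof.
case: F G => [F pF] [G pG] /= E; subst G.
by rewrite (proof_irrelevance _ pF pG).
Qed.

Lemma mon_radj_subproof (i : 'I_n) (F : mon_flag) :
  exists w, @radj _ X i \o sval F = act (@radj _ X) w.
Proof.
case: F => F [w E] /=; exists (rcons w i).
by apply: functional_extensionality => x; rewrite E -cats1 act_cat.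
Qed.

Definition mon_radj (i : 'I_n) (F : mon_flag) : mon_flag :=
  exist _ _ (mon_radj_subproof i F).

Lemma mon_radj_inv i F : mon_radj i (mon_radj i F) = F.
Proof. by apply: mon_flag_eq; apply: functional_extensionality => x /=; rewrite radj_inv. Qed.

Lemma mon_radj_comm (i j : 'I_n) F : far i j ->
  mon_radj j (mon_radj i (mon_radj j (mon_radj i F))) = F.
Proof.
by move=> ij; apply: mon_flag_eq; apply: functional_extensionality => x /=; rewrite radj_comm.
Qed.

Definition monodromy : premaniplex n := Premaniplex mon_radj_inv mon_radj_comm.

Definition mon_of (w : seq 'I_n) : monodromy :=
  exist _ (act (@radj _ X) w) (ex_intro _ w erefl).

Lemma val_act_monodromy w (F : monodromy) :
  sval (act (@radj _ monodromy) w F) = act (@radj _ X) w \o sval F.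
Proof. by elim: w F => [|i w IH] F //=; rewrite IH. Qed.

Lemma monodromy_connected : connected (@radj _ monodromy).
Proof.
move=> [F [w Fw]] [G [w' Gw']]; exists (rev w ++ w'); apply: mon_flag_eq.
rewrite val_act_monodromy; apply: functional_extensionality => x /=.
by rewrite Fw Gw' act_cat act_rev.
Qed.

End Monodromy.

Section VoltageOperator.
Variables (n m : nat) (Y : premaniplex m) (eta : Y -> seq 'I_m -> seq 'I_n).

Fixpoint walk_voltage (y : Y) (u : seq 'I_m) : seq 'I_n :=
  if u is i :: u' then eta y [:: i] ++ walk_voltage (@radj _ Y i y) u' else [::].

Lemma act_sd_adj (Z : premaniplex n) u (z : Z) (y : Y) :
  act (sd_adj eta) u (z, y) =
  (act (@radj _ Z) (walk_voltage y u) z, act (@radj _ Y) u y).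
Proof. by elim: u z y => [|i u IH] z y //=; rewrite /sd_adj /= IH act_cat. Qed.

Lemma preserves_connectivity_closed_walk :
  preserves_connectivity eta -> forall (X : premaniplex n) (y0 : Y) w,
  exists u, act (@radj _ Y) u y0 = y0 /\
    forall x : X, act (@radj _ X) (walk_voltage y0 u) x = act (@radj _ X) w x.
Proof.
move=> Hpres X y0 w.
have [u] := Hpres _ (@monodromy_connected _ X) (@mon_of _ X [::], y0) (@mon_of _ X w, y0).
rewrite act_sd_adj => -[/(f_equal sval) voltage_w closed_u].
exists u; split=> // x.
by have := f_equal (fun F => F x) voltage_w; rewrite val_act_monodromy.
Qed.

Variables (X : premaniplex n) (h : X * Y -> X * Y).
Hypothesis h_comm : forall i p, h (sd_adj eta i p) = sd_adj eta i (h p).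
Hypothesis h_snd : forall p, (h p).2 = p.2.

Lemma fibre_map_tree_invariant (T : Y -> 'I_m -> Prop) :
  (forall y i, T y i -> coxeq (eta y [:: i]) [::]) ->
  forall x w y, path_in T y w -> (h (x, act (@radj _ Y) w y)).1 = (h (x, y)).1.
Proof.
move=> T_triv x; elim=> [|i w IH] y //= [Tyi Tw].
have tree_dart (z : X) : sd_adj eta i (z, y) = (z, @radj _ Y i y).
  by rewrite /sd_adj /= (act_coxeq (T_triv y i Tyi)).
by rewrite IH // -tree_dart h_comm [h (x, y)]surjective_pairing h_snd tree_dart.
Qed.

Lemma fibre_map_const :
  trivial_spanning_tree eta -> forall x y y0, h (x, y) = ((h (x, y0)).1, y).
Proof.
move=> [T [[_ [T_span _]] T_triv]] x y y0.
have [w [Tw <-]] := T_span y0 y.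
by rewrite [h _]surjective_pairing h_snd (fibre_map_tree_invariant T_triv).
Qed.

Lemma fibre_map_radj : preserves_connectivity eta -> forall y0 j x,
  (h (@radj _ X j x, y0)).1 = @radj _ X j (h (x, y0)).1.
Proof.
move=> Hpres y0 j x.
have [u [closed_u voltage_u]] := preserves_connectivity_closed_walk Hpres X y0 [:: j].
have := act_commute h_comm u (x, y0).
rewrite [h (x, y0)]surjective_pairing h_snd !act_sd_adj !voltage_u closed_u.
by move/(f_equal fst).
Qed.

End VoltageOperator.

Theorem lemma4p1 (n m : nat) (X : premaniplex n) (Y : premaniplex m)
  (eta : Y -> seq 'I_m -> seq 'I_n)
  (Hop : voltage_operator eta)
  (HX : connected (@radj _ X))
  (Hpres : preserves_connectivity eta)
  (g : X * Y -> X * Y)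
  (Hg : is_aut (@sd_adj n m X Y eta) g)
  (HgY : forall p : X * Y, (g p).2 = p.2) :
  exists a : X -> X, is_aut (@radj _ X) a /\ forall (x : X) (y : Y), g (x, y) = (a x, y).
Proof.
case: Hop => _ Htree.
have [[y0]|Y_empty] := classic (inhabited Y); last first.
  by exists id; split=> [|x y]; [split=> //; exists id | case: Y_empty].
case: Hg => [[h gK hK] g_comm].
have h_comm := commute_inv gK hK g_comm.
have h_snd p : (h p).2 = p.2 by rewrite -{2}(hK p) HgY.
pose a x := (g (x, y0)).1.
have g_fibre x y : g (x, y) = (a x, y) := fibre_map_const g_comm HgY Htree x y y0.
have h_fibre x y : h (x, y) = ((h (x, y0)).1, y) := fibre_map_const h_comm h_snd Htree x y y0.
exists a; split=> //; split; last exact: fibre_map_radj.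
exists (fun x => (h (x, y0)).1) => x; first by rewrite -g_fibre gK.
by rewrite /a -h_fibre hK.
Qed.
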